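(* Let $\mathcal{A}$ be a line arrangement in $\mathbb{P}^2_{\mathbb{C}}$ which is not of class $\mathcal{C}_{\le 3}$ of simple type. Then there exist six distinct lines $H_1,\dots,H_6\in\mathcal{A}$ such that $H_1\cap H_2\cap H_3\ne\emptyset$, $H_4\cap H_5\cap H_6\ne\emptyset$, and $(H_1\cup H_2\cup H_3)\cap(H_4\cup H_5\cup H_6)$ consists of exactly $9$ points.
   Context: $\operatorname{mult}(\mathcal{A})$ is the set of points on at least three lines of $\mathcal{A}$. $\mathcal{A}$ is of type $\mathcal{C}_k$ if $k$ is the minimal number of lines of $\mathcal{A}$ whose union contains $\operatorname{mult}(\mathcal{A})$. ''$\mathcal{C}_{\le 3}$ of simple type'' means of type $\mathcal{C}_0,\mathcal{C}_1,\mathcal{C}_2$, or of type $\mathcal{C}_3$ such that there exist $H_1,H_2,H_3\in\mathcal{A}$ with $\operatorname{mult}(\mathcal{A})\subset H_1\cup H_2\cup H_3$ and either (i) $H_1\cap H_2\cap H_3=\emptyset$ and exactly one multiple point lies on $H_1\setminus(H_2\cup H_3)$, or (ii) $H_1\cap H_2\cap H_3\ne\emptyset$. *)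

(* Projective plane P^2 over an algebraically closed
   numeric field F (e.g. the complex numbers). *)
From HB Require Import structures.
From mathcomp Require Import all_boot all_order all_algebra.
Set Implicit Arguments. Unset Strict Implicit. Unset Printing Implicit Defensive.
Import Order.TTheory GRing.Theory Num.Theory.
Local Open Scope ring_scope.

Section Arr.
Variable F : numClosedFieldType.

(* Homogeneous coordinates: points and lines of P^2 are nonzero row
   vectors of length 3, up to nonzero scalars. *)
Definition same_pt (u v : 'rV[F]_3) : Prop := exists c : F, c != 0 /\ v = c *: u.

Definition on_line (l p : 'rV[F]_3) : bool := \sum_(i < 3) l 0 i * p 0 i == 0.

Definition arrangement (n : nat) (L : 'I_n -> 'rV[F]_3) : Prop :=
  (forall i, L i != 0) /\ (forall i j, i != j -> ~ same_pt (L i) (L j)).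

Definition is_mult n (L : 'I_n -> 'rV[F]_3) (p : 'rV[F]_3) : Prop :=
  p != 0 /\ (3 <= #|[set i | on_line (L i) p]|)%N.

Definition covers n (L : 'I_n -> 'rV[F]_3) (S : {set 'I_n}) : Prop :=
  forall p, is_mult L p -> exists2 i, i \in S & on_line (L i) p.

Definition type_C n (L : 'I_n -> 'rV[F]_3) (k : nat) : Prop :=
  (exists S : {set 'I_n}, #|S| = k /\ covers L S) /\
  (forall S : {set 'I_n}, covers L S -> (k <= #|S|)%N).

Definition concurrent n (L : 'I_n -> 'rV[F]_3) (i j k : 'I_n) : Prop :=
  exists p, p != 0 /\ [&& on_line (L i) p, on_line (L j) p & on_line (L k) p].

Definition simple_type_le3 n (L : 'I_n -> 'rV[F]_3) : Prop :=
  type_C L 0 \/ type_C L 1 \/ type_C L 2 \/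
  (type_C L 3 /\
   exists h1 h2 h3 : 'I_n,
     [/\ h1 != h2, h1 != h3, h2 != h3,
         covers L [set h1; h2; h3] &
         (~ concurrent L h1 h2 h3 /\
            exists p, [/\ is_mult L p, on_line (L h1) p, ~~ on_line (L h2) p,
                          ~~ on_line (L h3) p &
                          forall q, is_mult L q -> on_line (L h1) q ->
                             ~~ on_line (L h2) q -> ~~ on_line (L h3) q ->
                             same_pt p q])
         \/ concurrent L h1 h2 h3]).

(* the set of projective points represented by the predicate P
   (assumed invariant under nonzero scaling) has exactly k elements *)
Definition has_k_points (P : 'rV[F]_3 -> Prop) (k : nat) : Prop :=
  exists s : 'I_k -> 'rV[F]_3,
    (forall a, s a != 0 /\ P (s a)) /\
    (forall a b, a != b -> ~ same_pt (s a) (s b)) /\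
    (forall p, p != 0 -> P p -> exists a, same_pt (s a) p).

End Arr.

From HB Require Import structures.
From mathcomp Require Import all_boot all_order all_algebra zify.
From Stdlib Require Import Classical.
Import Order.TTheory GRing.Theory Num.Theory.
Local Open Scope ring_scope.
Set Implicit Arguments. Unset Strict Implicit.

(* Call two points p, q separated when at least three lines of A pass through p
   but not q and at least three pass through q but not p.  Three lines of each
   kind meet in exactly 3 * 3 points, since two distinct lines of A share at
   most one point.  If no two points are separated, any two multiple points lie
   on a common line of A, so the lines through one multiple point cover mult(A):
   if some multiple point lies on exactly three lines, these form a concurrent
   covering triple; if every multiple point lies on at least four lines, two
   distinct multiple points would be separated, so mult(A) is a single point. *)

Lemma ex_minimal_nat (P : nat -> Prop) :
  (exists n, P n) -> exists2 m, P m & forall n, P n -> (m <= n)%N.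
Proof.
move=> [n Pn]; apply: NNPP => nomin.
elim/ltn_ind: n Pn => n IHn Pn; apply: nomin; exists n => // m Pm.
by rewrite leqNgt; apply/negP => /IHn; apply.
Qed.

Lemma cards3 (T : finType) (x y z : T) :
  x != y -> x != z -> y != z -> #|[set x; y; z]| = 3%N.
Proof. by move=> xy xz yz; rewrite -setUA !cardsU1 cards1 !inE negb_or xy xz yz. Qed.

Section Incidence.
Variable F : numClosedFieldType.
Implicit Types u v w p x : 'rV[F]_3.

Lemma on_lineC u v : on_line u v = on_line v u.
Proof. by rewrite /on_line; congr (_ == 0); apply: eq_bigr => i _; rewrite mulrC. Qed.

Lemma on_lineZ u v (c : F) : c != 0 -> on_line u (c *: v) = on_line u v.
Proof.
move=> c0; rewrite /on_line.
have -> : \sum_(i < 3) u 0 i * (c *: v) 0 i = c * \sum_(i < 3) u 0 i * v 0 i.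
  by rewrite mulr_sumr; apply: eq_bigr => i _; rewrite mxE mulrCA.
by rewrite mulf_eq0 (negbTE c0).
Qed.

Lemma same_pt_on u v w : same_pt u v -> on_line w u = on_line w v.
Proof. by case=> c [c0 ->]; rewrite on_lineZ. Qed.

Lemma same_pt_sym u v : same_pt u v -> same_pt v u.
Proof.
case=> c [c0 ->]; exists c^-1; split; first by rewrite invr_eq0.
by rewrite scalerA mulVf // scale1r.
Qed.

Lemma same_pt_submx u v : u != 0 -> v != 0 -> (v <= u)%MS -> same_pt u v.
Proof.
move=> u0 v0 /submxP [D vD]; rewrite vD [D]mx11_scalar mul_scalar_mx in v0 *.
exists (D 0 0); split => //; by apply: contraNneq v0 => ->; rewrite scale0r.
Qed.

Lemma same_pt_rank1 u v :
  u != 0 -> v != 0 -> (\rank (col_mx u v) <= 1)%N -> same_pt u v.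
Proof.
move=> u0 v0 rk1; have := submx_refl (col_mx u v); rewrite col_mx_sub => /andP [uS vS].
have [_ eq_rk] := mxrank_leqif_sup uS.
have Su : (col_mx u v <= u)%MS by rewrite -eq_rk eqn_leq mxrankS //= rank_rV u0.
exact: same_pt_submx (submx_trans vS Su).
Qed.

Lemma mul_tr_eq0 w u : (w *m u^T == 0) = on_line w u.
Proof.
have -> : w *m u^T = (\sum_(i < 3) w 0 i * u 0 i)%:M.
  apply/matrixP => i j; rewrite !ord1 !mxE eqxx mulr1n.
  by apply: eq_bigr => k _; rewrite mxE.
rewrite /on_line; apply/eqP/eqP => [/(congr1 (fun M : 'M_1 => M 0 0))|->].
  by rewrite !mxE eqxx !mulr1n.
by rewrite raddf0.
Qed.

(* Width [1 + 1] rather than [2], so that the block-matrix lemmas apply. *)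
Definition incidence_mx u v : 'M[F]_(3, 1 + 1) := row_mx u^T v^T.

Lemma mul_incidence_mx_eq0 w u v :
  (w *m incidence_mx u v == 0) = on_line w u && on_line w v.
Proof. by rewrite /incidence_mx mul_mx_row row_mx_eq0 !mul_tr_eq0. Qed.

Lemma lines_meet u v : exists p, [&& p != 0, on_line u p & on_line v p].
Proof.
have : kermx (incidence_mx u v) != 0.
  by rewrite -mxrank_eq0 mxrank_ker subn_eq0 -ltnNge ltnS rank_leq_col.
case/rowV0Pn => p /sub_kermxP /eqP pK p0; exists p.
by rewrite p0 on_lineC [on_line v p]on_lineC -mul_incidence_mx_eq0 pK.
Qed.

Lemma line_through2_unique u v w1 w2 :
  u != 0 -> v != 0 -> w1 != 0 -> w2 != 0 -> ~ same_pt u v ->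
  on_line w1 u -> on_line w1 v -> on_line w2 u -> on_line w2 v ->
  same_pt w1 w2.
Proof.
move=> u0 v0 w10 w20 nuv w1u w1v w2u w2v.
have rk2 : \rank (incidence_mx u v) = 2%N.
  apply/eqP; rewrite eqn_leq rank_leq_col /incidence_mx -tr_col_mx mxrank_tr ltnNge.
  by apply/negP => /(same_pt_rank1 u0 v0).
have ker_w1 : (w1 <= kermx (incidence_mx u v))%MS.
  by apply/sub_kermxP/eqP; rewrite mul_incidence_mx_eq0 w1u w1v.
have ker_w2 : (w2 <= kermx (incidence_mx u v))%MS.
  by apply/sub_kermxP/eqP; rewrite mul_incidence_mx_eq0 w2u w2v.
have [_ eq_rk] := mxrank_leqif_sup ker_w1.
have ker_sub : (kermx (incidence_mx u v) <= w1)%MS.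
  by rewrite -eq_rk mxrank_ker rk2 rank_rV w10.
exact: same_pt_submx (submx_trans ker_w2 ker_sub).
Qed.

Lemma has_card_points (T : finType) (P : 'rV[F]_3 -> Prop) (pt : T -> 'rV[F]_3) :
  (forall t, pt t != 0 /\ P (pt t)) ->
  (forall t t', t != t' -> ~ same_pt (pt t) (pt t')) ->
  (forall x, x != 0 -> P x -> exists t, same_pt (pt t) x) ->
  has_k_points P #|T|.
Proof.
move=> ptP pt_inj pt_onto; exists (fun i => pt (enum_val i)); split; [|split].
- by move=> i; apply: ptP.
- by move=> i j ij; apply: pt_inj; rewrite (inj_eq enum_val_inj).
- by move=> x x0 /(pt_onto x x0) [t ptx]; exists (enum_rank t); rewrite enum_rankK.
Qed.

Lemma has_k_points_ext (P Q : 'rV[F]_3 -> Prop) k :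
  (forall x, P x <-> Q x) -> has_k_points P k -> has_k_points Q k.
Proof.
move=> PQ [s [sP [s_inj s_onto]]]; exists s; split; [|split] => //.
- by move=> a; have [s0 /PQ] := sP a.
- by move=> x x0 /PQ; apply: s_onto.
Qed.

End Incidence.

Section Arrangement.
Variables (F : numClosedFieldType) (n : nat) (L : 'I_n -> 'rV[F]_3).
Hypothesis arrL : arrangement L.
Implicit Types p q x : 'rV[F]_3.

Definition pencil p : {set 'I_n} := [set i | on_line (L i) p].

Lemma eq_line_through2 p x i j :
  p != 0 -> x != 0 -> ~ same_pt p x ->
  on_line (L i) p -> on_line (L i) x -> on_line (L j) p -> on_line (L j) x ->
  i = j.
Proof.
move=> p0 x0 npx ip ix jp jx; have [L0 Ldistinct] := arrL.
case: (eqVneq i j) => // /Ldistinct []; apply: (line_through2_unique p0 x0) => //.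
Qed.

Lemma card_pencilI_le1 p q :
  p != 0 -> q != 0 -> ~ same_pt p q -> (#|pencil p :&: pencil q| <= 1)%N.
Proof.
move=> p0 q0 npq; rewrite leqNgt; apply/card_gt1P => -[i [j [+ + ij]]].
rewrite !inE => /andP [ip iq] /andP [jp jq].
by move: ij; rewrite (eq_line_through2 p0 q0 npq ip iq jp jq) eqxx.
Qed.

Lemma eq_pencil_line p x i j k :
  p != 0 -> x != 0 -> on_line (L i) p -> on_line (L j) p -> ~~ on_line (L k) p ->
  on_line (L i) x -> on_line (L j) x -> on_line (L k) x -> i = j.
Proof.
move=> p0 x0 ip jp kNp ix jx kx.
case: (classic (same_pt p x)) => [px | npx].
  by move: kNp; rewrite (same_pt_on _ px) kx.
exact: eq_line_through2 npx ip ix jp jx.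
Qed.

Section Grid.
Variables (p q : 'rV[F]_3) (k1 k2 : nat) (A : 'I_k1 -> 'I_n) (B : 'I_k2 -> 'I_n).
Hypotheses (p0 : p != 0) (q0 : q != 0) (A_inj : injective A) (B_inj : injective B).
Hypotheses (Ap : forall a, on_line (L (A a)) p) (ANq : forall a, ~~ on_line (L (A a)) q).
Hypotheses (Bq : forall b, on_line (L (B b)) q) (BNp : forall b, ~~ on_line (L (B b)) p).

Definition grid_pt (ab : 'I_k1 * 'I_k2) : 'rV[F]_3 :=
  xchoose (lines_meet (L (A ab.1)) (L (B ab.2))).

Lemma grid_ptP ab :
  [&& grid_pt ab != 0, on_line (L (A ab.1)) (grid_pt ab) & on_line (L (B ab.2)) (grid_pt ab)].
Proof. exact: (xchooseP (lines_meet _ _)). Qed.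

Lemma has_grid_points :
  has_k_points
    (fun x => [exists a, on_line (L (A a)) x] && [exists b, on_line (L (B b)) x])
    (k1 * k2).
Proof.
have -> : (k1 * k2 = #|{: 'I_k1 * 'I_k2}|)%N by rewrite card_prod !card_ord.
apply: (has_card_points (pt := grid_pt)).
- move=> ab; have /and3P [ab0 abA abB] := grid_ptP ab; split=> //.
  by apply/andP; split; apply/existsP; [exists ab.1 | exists ab.2].
- move=> [a b] [a' b'] neq_ab same_ab.
  have /and3P [x0 xA xB] := grid_ptP (a, b).
  have /and3P [_ xA' xB'] := grid_ptP (a', b').
  rewrite -!(same_pt_on _ same_ab) /= in xA' xB'.
  have eq_a : a = a' by apply/A_inj/(eq_pencil_line p0 x0 (Ap a) (Ap a') (BNp b)).
  have eq_b : b = b' by apply/B_inj/(eq_pencil_line q0 x0 (Bq b) (Bq b') (ANq a)).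
  by move: neq_ab; rewrite eq_a eq_b eqxx.
- move=> x x0 /andP [/existsP [a xA] /existsP [b xB]]; exists (a, b).
  have /and3P [ab0 abA abB] := grid_ptP (a, b).
  apply: NNPP => nab; move: (ANq a).
  by rewrite (eq_line_through2 ab0 x0 nab abA xA abB xB) Bq.
Qed.

End Grid.

Definition separated p q :=
  (2 < #|pencil p :\: pencil q|)%N && (2 < #|pencil q :\: pencil p|)%N.

Lemma grid_of_separated p q :
  p != 0 -> q != 0 -> separated p q ->
  exists h1 h2 h3 h4 h5 h6 : 'I_n,
    uniq [:: h1; h2; h3; h4; h5; h6] /\
    concurrent L h1 h2 h3 /\
    concurrent L h4 h5 h6 /\
    has_k_points
      (fun x => (on_line (L h1) x || on_line (L h2) x || on_line (L h3) x)
             && (on_line (L h4) x || on_line (L h5) x || on_line (L h6) x))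
      9.
Proof.
move=> p0 q0 /andP [].
move=> /card_gt2P [h1 [h2 [h3 [[m1 m2 m3] [d12 d23 d31]]]]].
move=> /card_gt2P [h4 [h5 [h6 [[m4 m5 m6] [d45 d56 d64]]]]].
move: m1 m2 m3 m4 m5 m6; rewrite !inE.
move=> /andP [h1Nq h1p] /andP [h2Nq h2p] /andP [h3Nq h3p].
move=> /andP [h4Np h4q] /andP [h5Np h5q] /andP [h6Np h6q].
pose tA := [tuple h1; h2; h3]; pose tB := [tuple h4; h5; h6].
have tAP i : i \in tA -> on_line (L i) p && ~~ on_line (L i) q.
  by rewrite !inE => /or3P [] /eqP ->; apply/andP.
have tBP i : i \in tB -> on_line (L i) q && ~~ on_line (L i) p.
  by rewrite !inE => /or3P [] /eqP ->; apply/andP.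
have uA : uniq tA by rewrite /= !inE negb_or d12 eq_sym d31 d23.
have uB : uniq tB by rewrite /= !inE negb_or d45 eq_sym d64 d56.
exists h1, h2, h3, h4, h5, h6; split; [|split; [|split]].
- rewrite -[[:: _; _; _; _; _; _]]/(tA ++ tB : seq _) cat_uniq uA uB andbT.
  apply/hasPn => j /tBP /andP [_ jNp]; apply/negP => /tAP /andP [jp _].
  by rewrite jp in jNp.
- by exists p; rewrite p0 h1p h2p h3p.
- by exists q; rewrite q0 h4q h5q h6q.
- have injA : injective (tnth tA) by apply/tuple_uniqP.
  have injB : injective (tnth tB) by apply/tuple_uniqP.
  apply: (has_k_points_ext _ (has_grid_points p0 q0 injA injB _ _ _ _)).
  + by move=> x; rewrite !(existsb_tnth (fun i => on_line (L i) x)) /= !orbF !orbA.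
  + by move=> a; case/andP: (tAP _ (mem_tnth a tA)).
  + by move=> a; case/andP: (tAP _ (mem_tnth a tA)).
  + by move=> b; case/andP: (tBP _ (mem_tnth b tB)).
  + by move=> b; case/andP: (tBP _ (mem_tnth b tB)).
Qed.

Lemma pencilI_neq0 a x :
  is_mult L a -> is_mult L x -> ~~ separated a x -> pencil a :&: pencil x != set0.
Proof.
move=> [_ a3] [_ x3]; apply: contra => /eqP I0.
by rewrite /separated !cardsD I0 setIC I0 cards0 !subn0; apply/andP.
Qed.

Lemma separated_of_rich a x :
  a != 0 -> x != 0 -> ~ same_pt a x ->
  (3 < #|pencil a|)%N -> (3 < #|pencil x|)%N -> separated a x.
Proof.
move=> a0 x0 nax a4 x4.
have I1 := card_pencilI_le1 a0 x0 nax.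
have I1' := card_pencilI_le1 x0 a0 (fun xa => nax (same_pt_sym xa)).
by rewrite /separated !cardsD; apply/andP; split; lia.
Qed.

Lemma type_C_le_cover S : covers L S -> exists2 k, type_C L k & (k <= #|S|)%N.
Proof.
move=> cS; have : exists k, exists T : {set 'I_n}, #|T| = k /\ covers L T by exists #|S|, S.
case/ex_minimal_nat => _ [T [<- cT]] Tmin.
exists #|T|; first by split; [exists T | move=> U cU; apply: Tmin; exists U].
by apply: Tmin; exists S.
Qed.

Lemma simple_type_of_small_cover S : covers L S -> (#|S| <= 2)%N -> simple_type_le3 L.
Proof.
move=> /type_C_le_cover [k kC kS] S2.
by case: k kC kS => [|[|[|k]]] kC kS; [left | right; left | right; right; left | lia].
Qed.

Lemma simple_type_of_concurrent_cover h1 h2 h3 :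
  h1 != h2 -> h1 != h3 -> h2 != h3 -> covers L [set h1; h2; h3] ->
  concurrent L h1 h2 h3 -> simple_type_le3 L.
Proof.
move=> d12 d13 d23 cov conc; have [k kC] := type_C_le_cover cov.
rewrite cards3 // leq_eqVlt ltnS => /orP [/eqP k3 | k2].
  right; right; right; split; first by rewrite -k3.
  by exists h1, h2, h3; split => //; right.
by have [[S [Sk cS]] _] := kC; apply: (simple_type_of_small_cover cS); rewrite Sk.
Qed.

Section NoSeparatedPair.
Hypothesis no_separated : forall p q, p != 0 -> q != 0 -> ~~ separated p q.

Lemma covers_pencil a : is_mult L a -> covers L (pencil a).
Proof.
move=> ma x mx; have /set0Pn [i] := pencilI_neq0 ma mx (no_separated ma.1 mx.1).
by rewrite !inE => /andP [ia ix]; exists i; rewrite ?inE.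
Qed.

Lemma same_pt_rich_mult a x :
  is_mult L a -> is_mult L x -> (3 < #|pencil a|)%N -> (3 < #|pencil x|)%N ->
  same_pt a x.
Proof.
move=> [a0 _] [x0 _] a4 x4; apply: NNPP => nax.
by have := no_separated a0 x0; rewrite separated_of_rich.
Qed.

Lemma simple_type_of_no_separated : simple_type_le3 L.
Proof.
case: (classic (exists a, is_mult L a)) => [[a ma] | no_mult]; last first.
  apply: (@simple_type_of_small_cover set0); last by rewrite cards0.
  by move=> x mx; case: no_mult; exists x.
case: (classic (exists2 b, is_mult L b & #|pencil b| = 3%N)) => [[b mb b3] | no_triple].
  have /card_gt2P [h1 [h2 [h3 [[m1 m2 m3] [d12 d23 d31]]]]] : (2 < #|pencil b|)%N.
    by rewrite b3.
  have d13 : h1 != h3 by rewrite eq_sym.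
  move: m1 m2 m3; rewrite !inE => h1b h2b h3b.
  have eq_b : pencil b = [set h1; h2; h3].
    apply/eqP; rewrite eq_sym eqEcard cards3 // b3 leqnn andbT.
    by apply/subsetP => i; rewrite !inE => /orP [/orP [] |] /eqP ->.
  apply: (simple_type_of_concurrent_cover d12 d13 d23).
    by rewrite -eq_b; apply: covers_pencil.
  by exists b; rewrite mb.1 h1b h2b h3b.
have rich x : is_mult L x -> (3 < #|pencil x|)%N.
  move=> mx; rewrite ltn_neqAle eq_sym mx.2 andbT.
  by apply/eqP => x3; apply: no_triple; exists x.
have /card_gt0P [i ia] : (0 < #|pencil a|)%N := leq_trans (isT : 0 < 3)%N ma.2.
apply: (@simple_type_of_small_cover [set i]); last by rewrite cards1.
move=> x mx; exists i; first exact: set11.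
by move: ia; rewrite inE (same_pt_on _ (same_pt_rich_mult ma mx (rich a ma) (rich x mx))).
Qed.

End NoSeparatedPair.

End Arrangement.

Theorem mainTheorem10 (F : numClosedFieldType) (n : nat) (L : 'I_n -> 'rV[F]_3) :
  arrangement L -> ~ simple_type_le3 L ->
  exists h1 h2 h3 h4 h5 h6 : 'I_n,
    uniq [:: h1; h2; h3; h4; h5; h6] /\
    concurrent L h1 h2 h3 /\
    concurrent L h4 h5 h6 /\
    has_k_points
      (fun p => (on_line (L h1) p || on_line (L h2) p || on_line (L h3) p)
             && (on_line (L h4) p || on_line (L h5) p || on_line (L h6) p))
      9.
Proof.
move=> arrL not_simple; apply: NNPP => no_grid; apply: not_simple.
apply: (simple_type_of_no_separated arrL) => p q p0 q0; apply/negP => sep.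
exact: no_grid (grid_of_separated arrL p0 q0 sep).
Qed.
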